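(* Let $X_1, X_2, \dots$ be i.i.d. random variables with $\mathbb{P}(X_1 = l) = p_l$ for $l \in \mathbb{Z}^+$. Fix integers $k \ge 1$, $0 \le j \le k$ and $i_0 \in \mathbb{Z}^+$. For $i \ge 1$ let $\xi_i$ be the indicator of the event that $X_{i+k} = i_0$ and exactly $j$ of $X_i, X_{i+1}, \dots, X_{i+k-1}$ are $\ge i_0$. Then: (1) for every $i \ge 1$, $\mathbb{E}(\xi_i) = \mathbb{P}(\xi_i = 1) = \binom{k}{j} S_{i_0}^j (1-S_{i_0})^{k-j} p_{i_0}$; (2) for every $i \ge 1$, $\mathbb{E}(\xi_i \xi_{i+1}) = \binom{k-1}{j-1} S_{i_0}^{j} (1-S_{i_0})^{k-j} p_{i_0}^2$; (3) for $i_1, i_2 \ge 1$ with $|i_1 - i_2| = m > k$, $\mathbb{P}(\xi_{i_1} = 1, \xi_{i_2} = 1) = \mathbb{P}(\xi_{i_1} = 1)\mathbb{P}(\xi_{i_2} = 1)$ and $\mathbb{E}(\xi_{i_1}\xi_{i_2}) = \mathbb{E}(\xi_{i_1})\mathbb{E}(\xi_{i_2})$; (4) for $i_1, i_2 \ge 1$ with $|i_1 - i_2| = m \in \{1, 2, \dots, k\}$, \[ \phi_m := \mathbb{E}(\xi_{i_1}\xi_{i_2}) = \sum_{t=\max\{0, j-m-1\}}^{\min\{k-m, j-1\}} \binom{m}{j-t}\binom{m-1}{j-t-1}\binom{k-m}{t} S_{i_0}^{2j-t-1} (1-S_{i_0})^{m-2j+t+k} p_{i_0}^2 . \]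
   Context: $S_{i_0} = \mathbb{P}(X_1 \ge i_0) = \sum_{s \ge i_0} p_s$. Binomial coefficients $\binom{a}{b}$ are taken to be $0$ when $b < 0$ or $b > a$, an empty sum is $0$, and $0^0 = 1$. *)

From HB Require Import structures.
From mathcomp Require Import all_boot all_order all_algebra.
From mathcomp Require Import all_classical all_reals all_analysis.
Set Implicit Arguments. Unset Strict Implicit. Unset Printing Implicit Defensive.
Import Order.TTheory GRing.Theory Num.Theory.
Local Open Scope classical_set_scope.
Local Open Scope ring_scope.

Definition binz (a b : int) : nat :=
  match a, b with
  | Posz a', Posz b' => 'C(a', b')
  | _, _ => 0%N
  end.

Definition Pr d (T : measurableType d) (R : realType) (P : probability T R)
  (A : set T) : R := fine (P A).

Definition mutually_independent d (T : measurableType d) (R : realType)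
  (P : probability T R) (X : nat -> T -> nat) : Prop :=
  forall (I : seq nat) (A : nat -> set nat),
    uniq I -> all (fun i => 0 < i)%N I ->
    Pr P (\bigcap_(i in [set` I]) (X i @^-1` A i))
    = \prod_(i <- I) Pr P (X i @^-1` A i).

Definition S_tail d (T : measurableType d) (R : realType) (P : probability T R)
  (X : nat -> T -> nat) (i0 : nat) : R :=
  Pr P [set w | (i0 <= X 1%N w)%N].

Definition xi_event (T : Type) (X : nat -> T -> nat) (k j i0 i : nat) : set T :=
  [set w | X (i + k)%N w = i0 /\
           count (fun l => i0 <= X l w)%N (iota i k) = j].

Definition xi (T : Type) (R : realType) (X : nat -> T -> nat) (k j i0 i : nat)
  : T -> R := fun w => (w \in xi_event X k j i0 i)%:R.

(* phi_m formula; t ranges over max{0,j-m-1} .. min{k-m,j-1}, i.e. the nat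
   interval [j - (m+1), min(k-m+1, j)) with truncated subtraction *)
Definition phi (R : realType) (k j m : nat) (S p : R) : R :=
  \sum_((j - m.+1)%N <= t < minn (k - m).+1 j)
    (binz m (j%:Z - t%:Z))%:R
    * (binz (m%:Z - 1) (j%:Z - t%:Z - 1))%:R
    * (binz (k%:Z - m%:Z) t)%:R
    * S ^ (2 * j%:Z - t%:Z - 1)
    * (1 - S) ^ (m%:Z - 2 * j%:Z + t%:Z + k%:Z)
    * p ^+ 2.

From HB Require Import structures.
From mathcomp Require Import all_boot all_order all_algebra.
From mathcomp Require Import all_classical all_reals all_analysis.
From mathcomp Require Import zify ring.
Set Implicit Arguments. Unset Strict Implicit. Unset Printing Implicit Defensive.
Import Order.TTheory GRing.Theory Num.Theory.
Local Open Scope classical_set_scope.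
Local Open Scope ring_scope.

(* The event {xi_i = 1}, and the intersection of two such events whose windows
   are more than [k] apart, prescribe the number of values [>= i0] on disjoint
   blocks of coordinates and the value [i0] at single coordinates.  By
   independence such an event has probability [prod C(|L|, c) S^c (1 - S)^(|L| - c)]
   times one factor [p_i0] per single coordinate, proved by peeling off one
   coordinate at a time; this gives (1) and (3).  When two windows at distance
   [m <= k] overlap, one conditions on the number [t] of values [>= i0] among the
   [k - m] shared coordinates: the two windows then split into three disjoint
   blocks, and summing over [t] gives [phi_m], whose case [m = 1] is (2). *)

Section BinomialProbability.
Variables (R : comRingType) (s : R).

Definition binom_pr (n c : nat) : R := 'C(n, c)%:R * s ^+ c * (1 - s) ^+ (n - c).

Lemma binom_pr0n c : binom_pr 0 c = (c == 0)%:R.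
Proof. by case: c => [|c]; rewrite /binom_pr ?bin0 ?bin0n ?expr0 ?mul0r ?mulr1. Qed.

Lemma binom_prS n c :
  binom_pr n.+1 c = (if c is c'.+1 then s * binom_pr n c' else 0) + (1 - s) * binom_pr n c.
Proof.
rewrite /binom_pr; case: c => [|c]; first by rewrite !bin0 !subn0 exprS; ring.
rewrite binS natrD subSS; have [lt_cn|le_nc] := ltnP c n.
  by rewrite (_ : n - c = (n - c.+1).+1)%N ?exprS; [ring | lia].
rewrite (@bin_small n c.+1) ?ltnS //; have [-> ->] : (n - c = 0 /\ n - c.+1 = 0)%N by lia.
by rewrite exprS; ring.
Qed.

(* [t] counts the successes on the stretch shared by two overlapping windows;
   the guard [t < j] replaces the vanishing of a binomial with negative index. *)
Definition overlap_pr (m r j : nat) : R :=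
  \sum_(t < r.+1) if (t < j)%N then
    binom_pr m.+1 (j - t) * binom_pr r t * binom_pr m (j - t).-1 else 0.

Lemma overlap_pr0 r j : overlap_pr 0 r j = if j is j'.+1 then s * binom_pr r j' else 0.
Proof.
rewrite /overlap_pr; case: j => [|j]; first by rewrite big1.
rewrite (eq_bigr (fun t : 'I_r.+1 => if t == j :> nat then s * binom_pr r t else 0)).
  rewrite -big_mkcond (big_ord1_eq _ (fun t => s * binom_pr r t)); case: ltnP => // lt_rj.
  by rewrite /binom_pr bin_small // !mul0r mulr0.
move=> t _; rewrite binom_pr0n ltnS; case: (ltngtP t j) => [lt_tj | lt_jt | ->].
- by rewrite (_ : _.-1 == 0%N = false) ?mulr0 //; apply/eqP; lia.
- by [].
- by rewrite subSnn /= /binom_pr bin1 subnn !expr1 expr0; ring.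
Qed.

End BinomialProbability.

Lemma binz_lt0 (a b : int) : (b < 0)%R -> binz a b = 0%N.
Proof. by case: b => [b|b] b_lt0; [lia | case: a]. Qed.

Section OverlapFormula.
Variables (R : realType) (s q : R).

Lemma phi_summand m r j t : (t < j)%N -> (t <= r)%N ->
    (binz m.+1 (j%:Z - t%:Z))%:R * (binz (m.+1%:Z - 1) (j%:Z - t%:Z - 1))%:R
    * (binz ((m.+1 + r)%N%:Z - m.+1%:Z) t)%:R * s ^ (2 * j%:Z - t%:Z - 1)
    * (1 - s) ^ (m.+1%:Z - 2 * j%:Z + t%:Z + (m.+1 + r)%N%:Z) * q ^+ 2
  = binom_pr s m.+1 (j - t) * binom_pr s r t * binom_pr s m (j - t).-1 * q ^+ 2.
Proof.
move=> lt_tj le_tr.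
rewrite (_ : j%:Z - t%:Z = (j - t)%N%:Z); last by lia.
have [gt_jtm | le_jtm] := ltnP m.+1 (j - t).
  by rewrite [binz _ _]/binz /binom_pr bin_small // !mul0r.
rewrite (_ : (j - t)%N%:Z - 1 = (j - t).-1%:Z); last by lia.
rewrite (_ : m.+1%:Z - 1 = m%:Z); last by lia.
rewrite (_ : (m.+1 + r)%N%:Z - m.+1%:Z = r%:Z); last by lia.
rewrite (_ : 2 * j%:Z - t%:Z - 1 = ((j - t) + t + (j - t).-1)%N%:Z); last by lia.
rewrite (_ : m.+1%:Z - 2 * j%:Z + t%:Z + (m.+1 + r)%N%:Z
    = ((m.+1 - (j - t)) + (r - t) + (m - (j - t).-1))%N%:Z); last by lia.
by rewrite -!exprnP !exprD /binz /binom_pr; ring.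
Qed.

Lemma phi_overlap_pr m r j : phi (m.+1 + r) j m.+1 s q = overlap_pr s m r j * q ^+ 2.
Proof.
rewrite /phi /overlap_pr big_distrl addKn (big_nat_widen _ _ r.+1) ?geq_minl //.
rewrite big_geq_mkord big_mkcond.
apply: eq_bigr => t _; rewrite [RHS]/=; have le_tr : (t <= r)%N by rewrite -ltnS.
case: ifP => [/andP[/andP[_ lt_thi] le_lot] | out].
  have lt_tj : (t < j)%N by move: lt_thi; rewrite leq_min => /andP[].
  by rewrite lt_tj phi_summand.
case: ifP => [lt_tj | _]; last by rewrite mul0r.
by rewrite /binom_pr bin_small ?mul0r //; move: out; rewrite leq_min; lia.
Qed.
End OverlapFormula.

Section FiniteCoordinates.
Variables (d : measure_display) (T : measurableType d) (X : nat -> T -> nat).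
Hypothesis measurable_X : forall i n : nat, (0 < i)%N -> measurable (X i @^-1` [set n]).

Definition determined_by (L : seq nat) (E : set T) :=
  forall w w', {in L, forall l, X l w = X l w'} -> E w -> E w'.

Lemma measurable_coords (L : seq nat) (Q : seq nat -> Prop) :
  all (fun i => 0 < i)%N L -> measurable [set w | Q (map (X ^~ w) L)].
Proof.
elim: L Q => [|a L IHL] Q /=.
  by move=> _; have [HQ|HQ] := pselect (Q [::]);
    [rewrite (_ : [set _ | _] = setT) | rewrite (_ : [set _ | _] = set0)];
    rewrite ?predeqE //; apply: measurableT || apply: measurable0.
case/andP=> a_gt0 L_gt0.
have -> : [set w | Q (X a w :: map (X ^~ w) L)] =
    \bigcup_n (X a @^-1` [set n] `&` [set w | Q (n :: map (X ^~ w) L)]).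
  by rewrite predeqE => w; split => [Qw | [n _ [/= -> //]]]; exists (X a w).
apply: bigcupT_measurable => n; apply: measurableI; first exact: measurable_X.
exact: (IHL (fun s => Q (n :: s))).
Qed.

Lemma determined_by_measurable L E :
  all (fun i => 0 < i)%N L -> determined_by L E -> measurable E.
Proof.
move=> L_gt0 detE.
have -> : E = [set w | exists2 w', E w' & map (X ^~ w') L = map (X ^~ w) L].
  rewrite predeqE => w; split => [Ew | [w' Ew' /eq_in_map eqL]]; first by exists w.
  exact: detE eqL Ew'.
exact: (measurable_coords (fun s => exists2 w, E w & map (X ^~ w) L = s)).
Qed.

Lemma determined_byI L1 L2 E1 E2 :
  determined_by L1 E1 -> determined_by L2 E2 -> determined_by (L1 ++ L2) (E1 `&` E2).
Proof.
move=> det1 det2 w w' eqw [E1w E2w]; split.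
  by apply: det1 E1w => l Ll; apply: eqw; rewrite mem_cat Ll.
by apply: det2 E2w => l Ll; apply: eqw; rewrite mem_cat Ll orbT.
Qed.

Lemma measurable_X_preimage i (A : set nat) : (0 < i)%N -> measurable (X i @^-1` A).
Proof.
move=> i_gt0; apply: (@determined_by_measurable [:: i]); first by rewrite /= i_gt0.
by move=> w w' eqw; rewrite /preimage /= eqw // mem_seq1.
Qed.

End FiniteCoordinates.

Section RealProbability.
Variables (d : measure_display) (T : measurableType d) (R : realType)
  (P : probability T R).

Lemma Pr_set0 : Pr P set0 = 0.
Proof. by rewrite /Pr measure0. Qed.

Lemma Pr_setU A B : measurable A -> measurable B -> A `&` B = set0 ->
  Pr P (A `|` B) = Pr P A + Pr P B.
Proof. by move=> mA mB AB0; rewrite /Pr measureU // fineD // fin_num_measure. Qed.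

Lemma Pr_setC A : measurable A -> Pr P (~` A) = 1 - Pr P A.
Proof. by move=> mA; rewrite /Pr probability_setC // fineB // fin_num_measure. Qed.

Lemma Pr_split_bool (E : set T) (g : T -> bool) :
  measurable (E `&` [set w | g w = true]) -> measurable (E `&` [set w | g w = false]) ->
  Pr P E = Pr P (E `&` [set w | g w = true]) + Pr P (E `&` [set w | g w = false]).
Proof.
move=> mEt mEf; rewrite -Pr_setU //; last first.
  by rewrite predeqE => w; split => // -[[_ /= gt] [_ /=]]; rewrite gt.
congr Pr; rewrite predeqE => w; split => [Ew | [[] | []] //].
by case gw: (g w); [left | right].
Qed.

Lemma Pr_partition (E : set T) (f : T -> nat) N :
  (forall t, measurable (E `&` f @^-1` [set t])) -> (forall w, E w -> (f w < N)%N) ->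
  Pr P E = \sum_(t < N) Pr P (E `&` f @^-1` [set nat_of_ord t]).
Proof.
move=> mEt ltfN.
suff Pr_lt n : measurable (E `&` f @^-1` [set t | (t < n)%N]) /\
    Pr P (E `&` f @^-1` [set t | (t < n)%N])
    = \sum_(t < n) Pr P (E `&` f @^-1` [set nat_of_ord t]).
  rewrite -(Pr_lt N).2; congr Pr; rewrite predeqE => w.
  by split => [Ew | [] //]; split => //; exact: ltfN.
elim: n => [|n [mElt IHn]].
  rewrite big_ord0 (_ : _ `&` _ = set0) ?Pr_set0 //.
  by rewrite predeqE => w; split => // -[_ /=]; rewrite ltn0.
have -> : E `&` f @^-1` [set t | (t < n.+1)%N] =
    (E `&` f @^-1` [set t | (t < n)%N]) `|` (E `&` f @^-1` [set n]).
  rewrite predeqE => w /=; rewrite ltnS leq_eqVlt.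
  split => [[Ew /orP[/eqP|]] | [[Ew ltfn] | [Ew ->]]];
    by [right | left | rewrite ltfn orbT | rewrite eqxx].
split; first exact: measurableU.
rewrite Pr_setU ?big_ord_recr ?IHn //.
by rewrite predeqE => w; split => // -[[_ /= ltfn] [_ /= eqfn]]; rewrite eqfn ltnn in ltfn.
Qed.

Lemma integral_indicator (E : set T) : measurable E ->
  (\int[P]_w ((w \in E)%:R : R)%:E)%E = (Pr P E)%:E.
Proof.
move=> mE; rewrite /Pr fineK ?fin_num_measure // -[in RHS](setIT E).
exact: integral_indic.
Qed.

Lemma integral_indicatorM (E1 E2 : set T) : measurable (E1 `&` E2) ->
  (\int[P]_w (((w \in E1)%:R : R) * (w \in E2)%:R)%:E)%E = (Pr P (E1 `&` E2))%:E.
Proof.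
move=> mE; rewrite -integral_indicator //; apply: eq_integral => w _.
by rewrite in_setI -natrM mulnb.
Qed.

End RealProbability.

Section Marginals.
Variables (d : measure_display) (T : measurableType d) (R : realType)
  (P : probability T R) (X : nat -> T -> nat) (p : nat -> R).
Hypothesis measurable_X : forall i n : nat, (0 < i)%N -> measurable (X i @^-1` [set n]).
Hypothesis distribution_X : forall i l : nat, (0 < i)%N -> Pr P (X i @^-1` [set l]) = p l.

Lemma Pr_X_lt a n : (0 < a)%N -> Pr P (X a @^-1` [set x | (x < n)%N]) = \sum_(l < n) p l.
Proof.
move=> a_gt0; elim: n => [|n IHn].
  by rewrite big_ord0 -(Pr_set0 P); congr Pr; rewrite predeqE.
rewrite big_ord_recr /= -IHn -(distribution_X n a_gt0) -Pr_setU;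
  try exact: measurable_X_preimage.
  congr Pr; rewrite predeqE => w; rewrite /preimage /= ltnS leq_eqVlt.
  split => [/orP[/eqP -> | lt] | [lt | ->]];
    [by right | by left | by rewrite lt orbT | by rewrite eqxx].
by rewrite predeqE => w; split => // -[/= lt eq]; rewrite eq ltnn in lt.
Qed.

Lemma Pr_X_ge a n : (0 < a)%N -> Pr P (X a @^-1` [set x | (n <= x)%N]) = 1 - \sum_(l < n) p l.
Proof.
move=> a_gt0; rewrite -(Pr_X_lt n a_gt0) -Pr_setC; last exact: measurable_X_preimage.
by congr Pr; rewrite predeqE => w; rewrite /preimage /= leqNgt; split => /negP.
Qed.

End Marginals.

Section Windows.
Variables (d : measure_display) (T : measurableType d) (R : realType)
  (P : probability T R) (X : nat -> T -> nat) (p : nat -> R) (i0 : nat).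
Hypothesis measurable_X : forall i n : nat, (0 < i)%N -> measurable (X i @^-1` [set n]).
Hypothesis independent_X : mutually_independent P X.
Hypothesis distribution_X : forall i l : nat, (0 < i)%N -> Pr P (X i @^-1` [set l]) = p l.

Local Notation S := (S_tail P X i0).

Lemma Pr_X_tail a (b : bool) : (0 < a)%N ->
  Pr P (X a @^-1` [set x | (i0 <= x)%N = b]) = if b then S else 1 - S.
Proof.
move=> a_gt0; have Pr_ge := Pr_X_ge measurable_X distribution_X.
rewrite /S_tail Pr_ge //; case: b; first exact: Pr_ge.
rewrite opprB addrC subrK -(Pr_X_lt measurable_X distribution_X i0 a_gt0).
by congr Pr; rewrite predeqE => w; rewrite /preimage /= ltnNge; split => [/negbT | /negbTE].
Qed.

Definition count_ge (L : seq nat) (w : T) : nat := count (fun l => i0 <= X l w)%N L.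
Arguments count_ge L w : simpl never.

Definition block_event (Ls : seq (seq nat * nat)) (K : seq nat) (A : nat -> set nat) : set T :=
  [set w | all (fun Lc => count_ge Lc.1 w == Lc.2) Ls /\ {in K, forall l, A l (X l w)}].

Definition block_indices (Ls : seq (seq nat * nat)) (K : seq nat) : seq nat :=
  flatten (map fst Ls) ++ K.

Definition fupdate (A : nat -> set nat) (a : nat) (B : set nat) : nat -> set nat :=
  fun l => if l == a then B else A l.

Lemma determined_count_ge L (Q : nat -> Prop) :
  determined_by X L [set w | Q (count_ge L w)].
Proof.
move=> w w' eqw; rewrite /= (_ : count_ge L w' = count_ge L w) //.
by apply: eq_in_count => l /eqw ->.
Qed.

Lemma determined_block_event Ls K A :
  determined_by X (block_indices Ls K) (block_event Ls K A).
Proof.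
move=> w w' eqw [counts inK]; split.
  apply/allP => Lc LcLs; rewrite -(eqP (allP counts Lc LcLs)); apply/eqP.
  apply: eq_in_count => l lL; rewrite eqw // mem_cat; apply/orP; left.
  by apply/flattenP; exists Lc.1 => //; exact: map_f.
by move=> l lK; rewrite -eqw ?mem_cat ?lK ?orbT //; exact: inK.
Qed.

Lemma measurable_block_event Ls K A : all (fun i => 0 < i)%N (block_indices Ls K) ->
  measurable (block_event Ls K A).
Proof.
move=> posI.
exact: (determined_by_measurable measurable_X posI (@determined_block_event Ls K A)).
Qed.

Lemma block_eventI Ls1 Ls2 K1 K2 A :
  block_event Ls1 K1 A `&` block_event Ls2 K2 A = block_event (Ls1 ++ Ls2) (K1 ++ K2) A.
Proof.
rewrite predeqE => w; rewrite /block_event /= all_cat.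
split => [[[c1 in1] [c2 in2]] | [/andP[c1 c2] in12]].
  by split => [|l]; [rewrite c1 | rewrite mem_cat => /orP[/in1 | /in2]].
by split; split => // l lK; apply: in12; rewrite mem_cat lK ?orbT.
Qed.

Lemma Pr_block_event_nil K A : uniq K -> all (fun i => 0 < i)%N K ->
  Pr P (block_event [::] K A) = \prod_(l <- K) Pr P (X l @^-1` A l).
Proof.
move=> uniqK posK; rewrite -independent_X //; congr Pr.
rewrite predeqE => w; split => [[_ inK] l /inK // | inK].
by split => // l lK; exact: inK.
Qed.

Lemma block_event_nil_block c Ls K A :
  block_event (([::], c) :: Ls) K A = if c == 0%N then block_event Ls K A else set0.
Proof. by case: c => [|c]; rewrite predeqE => w //=; split => -[]. Qed.

Lemma block_event_peel a L c (b : bool) Ls K A : a \notin K ->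
  block_event ((a :: L, c + b)%N :: Ls) K A `&` X a @^-1` [set x | (i0 <= x)%N = b]
  = block_event ((L, c) :: Ls) (a :: K) (fupdate A a [set x | (i0 <= x)%N = b]).
Proof.
move=> aK; rewrite predeqE => w; rewrite /block_event /fupdate /count_ge /=.
have A_K : {in K, forall l, (if l == a then [set x | (i0 <= x)%N = b] else A l) = A l}.
  by move=> l lK; case: eqP => // eq_la; rewrite -eq_la lK in aK.
split => [[[/andP[/eqP cnt counts] inK] Xa] | [/andP[/eqP cnt counts] inK]].
  split; first by rewrite counts andbT; apply/eqP; rewrite Xa [RHS]addnC in cnt; exact: (addnI cnt).
  move=> l; rewrite inE => /orP[/eqP -> | lK]; first by rewrite eqxx.
  by rewrite A_K //; exact: inK.
have Xa : (i0 <= X a w)%N = b by have := inK a (mem_head _ _); rewrite eqxx.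
split=> //; split; first by rewrite counts andbT Xa cnt addnC.
by move=> l lK; rewrite -A_K //; apply: inK; rewrite inE lK orbT.
Qed.

Lemma block_event_peel0 a L Ls K A :
  block_event ((a :: L, 0%N) :: Ls) K A `&` X a @^-1` [set x | (i0 <= x)%N = true] = set0.
Proof.
rewrite predeqE => w; split => // -[[/andP[cnt _] _] /= Xa].
by move: cnt; rewrite /count_ge /= Xa.
Qed.

Lemma Pr_block_event Ls K A :
  uniq (block_indices Ls K) -> all (fun i => 0 < i)%N (block_indices Ls K) ->
  Pr P (block_event Ls K A) =
    \prod_(Lc <- Ls) binom_pr S (size Lc.1) Lc.2 * \prod_(l <- K) Pr P (X l @^-1` A l).
Proof.
elim: Ls K A => [|[L c] Ls IHLs] K A; first by rewrite big_nil mul1r; exact: Pr_block_event_nil.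
elim: L c K A => [|a L IHL] c K A uniqI posI.
  rewrite block_event_nil_block big_cons binom_pr0n.
  by case: eqP => _; rewrite ?Pr_set0 ?mul1r ?mul0r //; exact: IHLs.
set F := flatten (map fst Ls).
have [a_gt0 aK] : (0 < a)%N /\ a \notin K.
  move: uniqI posI; rewrite /block_indices /= mem_cat negb_or.
  by move=> /andP[/andP[_ ->] _] /andP[].
have permI : perm_eq ((L ++ F) ++ a :: K) (a :: (L ++ F) ++ K).
  by rewrite (perm_catCA _ [:: a] K).
have uniqI' : uniq ((L ++ F) ++ a :: K) by rewrite (perm_uniq permI).
have posI' : all (fun i => 0 < i)%N ((L ++ F) ++ a :: K) by rewrite (perm_all _ permI).
clear uniqI posI.
have Pr_peel c' (b : bool) :
    Pr P (block_event ((a :: L, c' + b)%N :: Ls) K A `&` X a @^-1` [set x | (i0 <= x)%N = b])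
    = (if b then S else 1 - S) * binom_pr S (size L) c'
      * \prod_(Lc <- Ls) binom_pr S (size Lc.1) Lc.2 * \prod_(l <- K) Pr P (X l @^-1` A l).
  rewrite block_event_peel // IHL // !big_cons /fupdate eqxx Pr_X_tail //.
  rewrite (eq_big_seq (fun l => Pr P (X l @^-1` A l))); first by ring.
  by move=> l lK; case: eqP => // eq_la; rewrite -eq_la lK in aK.
have mpiece c' (b : bool) : measurable
    (block_event ((a :: L, c' + b)%N :: Ls) K A `&` X a @^-1` [set x | (i0 <= x)%N = b]).
  by rewrite block_event_peel //; apply: measurable_block_event.
rewrite (@Pr_split_bool _ _ _ P _ (fun w => i0 <= X a w)%N); first last.
- by have := mpiece c false; rewrite addn0.
- by case: c => [|c]; [rewrite block_event_peel0 | have := mpiece c true; rewrite addn1].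
have := Pr_peel c false; rewrite addn0 => ->.
rewrite big_cons binom_prS /=; case: c => [|c].
  by rewrite block_event_peel0 Pr_set0 add0r; ring.
by have := Pr_peel c true; rewrite addn1 => ->; ring.
Qed.

Ltac solve_indices :=
  rewrite /block_indices; cbn [flatten foldr map fst];
  repeat (rewrite cat_uniq; apply/and3P; split);
  rewrite ?iota_uniq //;
  try (apply/hasPn => ?); try (apply/allP => ?);
  rewrite /= ?(mem_cat, mem_iota, inE, andbT); lia.

Lemma determined_xi_event k j i : determined_by X (iota i k.+1) (xi_event X k j i0 i).
Proof.
move=> w w' eqw [Xik cnt]; split; first by rewrite -eqw // mem_iota; lia.
by rewrite -cnt; apply: eq_in_count => l; rewrite mem_iota => l_in; rewrite eqw // mem_iota; lia.
Qed.

Lemma measurable_xi_event k j i : (0 < i)%N -> measurable (xi_event X k j i0 i).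
Proof.
move=> i_gt0; apply: (determined_by_measurable measurable_X _ (@determined_xi_event k j i)).
by apply/allP => l; rewrite mem_iota; lia.
Qed.

Lemma xi_event_block k j i :
  xi_event X k j i0 i = block_event [:: (iota i k, j)] [:: (i + k)%N] (fun=> [set i0]).
Proof.
rewrite predeqE => w; rewrite /block_event /= andbT.
split => [[Xik cnt] | [/eqP cnt Xik]]; last by split => //; apply: Xik; rewrite inE.
by split; [apply/eqP | move=> l; rewrite inE => /eqP ->].
Qed.

Lemma Pr_xi_event k j i : (0 < i)%N -> Pr P (xi_event X k j i0 i) = binom_pr S k j * p i0.
Proof.
move=> i_gt0; rewrite xi_event_block Pr_block_event //; try solve_indices.
by rewrite !big_seq1 /= size_iota distribution_X // addn_gt0 i_gt0.
Qed.

Lemma Pr_xi_event_far k j i1 i2 : (0 < i1)%N -> (0 < i2)%N ->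
  (k < maxn i1 i2 - minn i1 i2)%N ->
  Pr P (xi_event X k j i0 i1 `&` xi_event X k j i0 i2)
  = Pr P (xi_event X k j i0 i1) * Pr P (xi_event X k j i0 i2).
Proof.
wlog le_i12 : i1 i2 / (i1 <= i2)%N.
  move=> gen i1_gt0 i2_gt0; case/orP: (leq_total i1 i2) => [le_i12 | le_i21].
    exact: (gen i1 i2 le_i12 i1_gt0 i2_gt0).
  by rewrite setIC mulrC maxnC minnC; exact: (gen i2 i1 le_i21 i2_gt0 i1_gt0).
rewrite (maxn_idPr le_i12) (minn_idPl le_i12) => i1_gt0 _ far.
rewrite !Pr_xi_event; try lia.
rewrite !xi_event_block block_eventI Pr_block_event //=; try solve_indices.
by rewrite !big_cons !big_nil /= !size_iota !distribution_X; [ring | lia | lia].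
Qed.

Section Overlap.
Variables (m r j i : nat).
Let k := (m.+1 + r)%N.
Let overlap := xi_event X k j i0 i `&` xi_event X k j i0 (i + m.+1).
Let shared := count_ge (iota (i + m.+1) r).

Lemma overlap_counts w : overlap w <->
  [/\ X (i + m.+1 + r)%N w = i0, X (i + m.+1 + k)%N w = i0,
      count_ge (iota i m.+1) w + shared w = j
    & shared w + 1 + count_ge (iota (i + m.+1 + r).+1 m) w = j]%N.
Proof.
rewrite /overlap /shared /xi_event /count_ge.
rewrite (_ : iota i k = iota i m.+1 ++ iota (i + m.+1) r); last by rewrite iotaD.
rewrite (_ : iota (i + m.+1) k = iota (i + m.+1) r ++ iota (i + m.+1 + r) m.+1);
  last by rewrite /k (addnC m.+1 r) iotaD.
rewrite (_ : i + k = i + m.+1 + r)%N ?addnA //= !count_cat /=.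
split => [[[Xr cnt1] [Xk cnt2]] | [Xr Xk cnt1 cnt2]].
  by move: cnt2; rewrite Xr leqnn => cnt2; split => //; lia.
by rewrite Xr leqnn; split; split => //; lia.
Qed.

Lemma overlap_slice t : (t < j)%N ->
  overlap `&` shared @^-1` [set t] =
  block_event
    [:: (iota i m.+1, j - t); (iota (i + m.+1) r, t); (iota (i + m.+1 + r).+1 m, (j - t).-1)]%N
    [:: (i + m.+1 + r)%N; (i + m.+1 + k)%N] (fun=> [set i0]).
Proof.
move=> lt_tj; rewrite predeqE => w; rewrite /block_event /= overlap_counts /shared.
rewrite -[i :: iota i.+1 m]/(iota i m.+1). (* undo [simpl] on the first block *)
split => [[[Xr Xk cnt1 cnt2] cnt_sh] | [/and4P[/eqP cnt1 /eqP cnt_sh /eqP cnt3 _] inK]].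
  split; first by apply/and4P; split => //; apply/eqP; lia.
  by move=> l; rewrite !inE => /orP[] /eqP ->.
have Xr : X (i + m.+1 + r)%N w = i0 by apply: inK; rewrite inE eqxx.
have Xk : X (i + m.+1 + k)%N w = i0 by apply: inK; rewrite !inE eqxx orbT.
by split => //; split => //; lia.
Qed.

Lemma overlap_slice_empty t : (j <= t)%N -> overlap `&` shared @^-1` [set t] = set0.
Proof.
move=> le_jt; rewrite predeqE => w; rewrite /= overlap_counts.
by split => // -[[_ _ _ cnt2] cnt_sh]; lia.
Qed.

Lemma Pr_xi_event_overlap : (0 < i)%N -> Pr P overlap = overlap_pr S m r j * p i0 ^+ 2.
Proof.
move=> i_gt0; rewrite (@Pr_partition _ _ _ P _ shared r.+1); first last.
- by move=> w _; rewrite ltnS /shared /count_ge (leq_trans (count_size _ _)) ?size_iota.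
- move=> t; apply: (determined_by_measurable measurable_X _
    (determined_byI (determined_byI (@determined_xi_event _ _ _) (@determined_xi_event _ _ _))
       (@determined_count_ge _ (fun c => c = t)))).
  by apply/allP => l; rewrite !mem_cat !mem_iota; lia.
rewrite /overlap_pr big_distrl; apply: eq_bigr => t _ /=; case: ltnP => [lt_tj | le_jt].
  rewrite overlap_slice // Pr_block_event //; try solve_indices.
  by rewrite !big_cons !big_nil /= !size_iota !distribution_X; [ring | lia | lia].
by rewrite overlap_slice_empty // Pr_set0 mul0r.
Qed.

End Overlap.

Lemma Pr_xi_event_adjacent k j i : (0 < k)%N -> (0 < i)%N ->
  Pr P (xi_event X k j i0 i `&` xi_event X k j i0 i.+1)
  = (binz (k%:Z - 1) (j%:Z - 1))%:R * S ^+ j * (1 - S) ^+ (k - j) * p i0 ^+ 2.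
Proof.
case: k => [//|k] _ i_gt0.
have := Pr_xi_event_overlap 0 k j i_gt0; rewrite add1n addn1 => ->; rewrite overlap_pr0.
case: j => [|j]; first by rewrite binz_lt0 ?mul0r.
have [-> ->] : k.+1%:Z - 1 = k /\ j.+1%:Z - 1 = j by lia.
by rewrite /binom_pr /binz subSS (exprS _ j); ring.
Qed.

Lemma Pr_xi_event_near k j i1 i2 : (0 < i1)%N -> (0 < i2)%N ->
  (0 < maxn i1 i2 - minn i1 i2 <= k)%N ->
  Pr P (xi_event X k j i0 i1 `&` xi_event X k j i0 i2)
  = phi k j (maxn i1 i2 - minn i1 i2) S (p i0).
Proof.
wlog le_i12 : i1 i2 / (i1 <= i2)%N.
  move=> gen i1_gt0 i2_gt0; case/orP: (leq_total i1 i2) => [le_i12 | le_i21].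
    exact: (gen i1 i2 le_i12 i1_gt0 i2_gt0).
  by rewrite setIC maxnC minnC; exact: (gen i2 i1 le_i21 i2_gt0 i1_gt0).
rewrite (maxn_idPr le_i12) (minn_idPl le_i12) => i1_gt0 _ near.
have [m [r [-> ->]]] : exists m r, i2 = (i1 + m.+1)%N /\ k = (m.+1 + r)%N.
  by exists (i2 - i1).-1, (k - (i2 - i1))%N; lia.
by rewrite addKn phi_overlap_pr Pr_xi_event_overlap.
Qed.

Lemma xi_eq1 k j i : [set w | xi R X k j i0 i w = 1] = xi_event X k j i0 i.
Proof.
rewrite predeqE => w; rewrite /xi /=; case: (boolP (w \in _)) => wE.
  by split => // _; exact: set_mem.
split => [/eqP | Ew]; first by rewrite eq_sym oner_eq0.
by rewrite mem_set in wE.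
Qed.

Lemma expectation_xi k j i : (0 < i)%N ->
  (\int[P]_w (xi R X k j i0 i w)%:E)%E = (Pr P (xi_event X k j i0 i))%:E.
Proof. by move=> i_gt0; apply: integral_indicator; exact: measurable_xi_event. Qed.

Lemma expectation_xiM k j i1 i2 : (0 < i1)%N -> (0 < i2)%N ->
  (\int[P]_w (xi R X k j i0 i1 w * xi R X k j i0 i2 w)%:E)%E
  = (Pr P (xi_event X k j i0 i1 `&` xi_event X k j i0 i2))%:E.
Proof.
by move=> *; apply: integral_indicatorM; apply: measurableI; exact: measurable_xi_event.
Qed.

End Windows.

Theorem theorem4 (d : measure_display) (T : measurableType d) (R : realType)
  (P : probability T R) (X : nat -> T -> nat) (p : nat -> R)
  (HXmeas : forall i n : nat, (0 < i)%N -> measurable (X i @^-1` [set n]))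
  (Hindep : mutually_independent P X)
  (Hp0 : p 0%N = 0)
  (Hdist : forall i l : nat, (0 < i)%N -> Pr P (X i @^-1` [set l]) = p l)
  (k j i0 : nat) (Hk : (1 <= k)%N) (Hj : (j <= k)%N) (Hi0 : (1 <= i0)%N) :
  let S := S_tail P X i0 in
  (forall i : nat, (1 <= i)%N ->
     ((\int[P]_w (xi R X k j i0 i w)%:E)%E = (Pr P [set w | xi R X k j i0 i w = 1])%:E)
     /\ Pr P [set w | xi R X k j i0 i w = 1]
        = (binz k j)%:R * S ^+ j * (1 - S) ^+ (k - j) * p i0) /\
  (forall i : nat, (1 <= i)%N ->
     (\int[P]_w (xi R X k j i0 i w * xi R X k j i0 i.+1 w)%:E)%E
     = ((binz (k%:Z - 1) (j%:Z - 1))%:R * S ^+ j * (1 - S) ^+ (k - j)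
         * p i0 ^+ 2)%:E) /\
  (forall i1 i2 m : nat, (1 <= i1)%N -> (1 <= i2)%N ->
     (maxn i1 i2 - minn i1 i2)%N = m -> (k < m)%N ->
     Pr P [set w | xi R X k j i0 i1 w = 1 /\ xi R X k j i0 i2 w = 1]
       = Pr P [set w | xi R X k j i0 i1 w = 1] * Pr P [set w | xi R X k j i0 i2 w = 1]
     /\ (\int[P]_w (xi R X k j i0 i1 w * xi R X k j i0 i2 w)%:E)%E
        = ((\int[P]_w (xi R X k j i0 i1 w)%:E) * (\int[P]_w (xi R X k j i0 i2 w)%:E))%E) /\
  (forall i1 i2 m : nat, (1 <= i1)%N -> (1 <= i2)%N ->
     (maxn i1 i2 - minn i1 i2)%N = m -> (1 <= m <= k)%N ->
     (\int[P]_w (xi R X k j i0 i1 w * xi R X k j i0 i2 w)%:E)%E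
     = (phi k j m S (p i0))%:E).
Proof.
move=> S; have E1 := expectation_xi P i0 HXmeas k j.
have E2 := expectation_xiM P i0 HXmeas k j.
split; [|split; [|split]].
- by move=> i i_gt0; rewrite xi_eq1 E1 // (Pr_xi_event i0 HXmeas Hindep Hdist).
- by move=> i i_gt0; rewrite E2 // (Pr_xi_event_adjacent i0 HXmeas Hindep Hdist).
- move=> i1 i2 m i1_gt0 i2_gt0 <- far.
  have Pr_far := Pr_xi_event_far i0 HXmeas Hindep Hdist j i1_gt0 i2_gt0 far.
  rewrite -[[set w | _ /\ _]]/([set w | _] `&` [set w | _]) !xi_eq1 E2 // !E1 //.
  by rewrite Pr_far EFinM.
- move=> i1 i2 m i1_gt0 i2_gt0 <- near.
  by rewrite E2 // (Pr_xi_event_near i0 HXmeas Hindep Hdist).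
Qed.
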